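(* In the allocation problem and Synchronized Greedy (SG) mechanism described in the context, let $S$ be a set of agents with $\min_j q_j\ge \sum_{i\in S} r_i$. Then there is no bid profile $\sigma$ with $\sigma_{i}=\pi_{i}$ for all $i\notin S$ such that $a^\sigma_{i*}$ is weakly preferred to $a^\pi_{i*}$ by every $i\in S$ (i.e., $a^\sigma_{i*}=a^\pi_{i*}$ or $a^\sigma_{i*}>_i a^\pi_{i*}$) and $a^\sigma_{i*}>_i a^\pi_{i*}$ for at least one $i\in S$. That is, SG is group strategy-proof against the family of all such coalitions $S$.
   Context: There are $m$ distinct divisible goods; good $j$ is available in amount $q_j>0$. There are $n$ agents; agent $i$ is to receive a total of $r_i>0$, with $\sum_j q_j=\sum_i r_i$. An allocation is a family $a_{ij}\ge 0$ with $\sum_j a_{ij}=r_i$ and $\sum_i a_{ij}=q_j$; $a_{i*}=(a_{i1},\ldots,a_{im})$ is agent $i$'s share. Each agent $i$ has a true preference list $\pi_i$, a permutation of the goods ($\pi_i(1)$ most preferred); $\pi=(\pi_1,\ldots,\pi_n)$. Agent $i$ prefers $a_{i*}$ to $b_{i*}$, written $a_{i*}>_i b_{i*}$, if the leftmost nonzero coordinate of $(a_{i\pi_i(\ell)}-b_{i\pi_i(\ell)})_{\ell=1}^m$ is positive. The SG mechanism: each agent $i$ bids a permutation $\sigma_i$ of the goods; over time $t\in[0,1]$ each agent $i$ receives, at rate $r_i$, the good highest in $\sigma_i$ among those not yet exhausted (a good is exhausted when the total amount handed out equals $q_j$; several agents may receive a good simultaneously; upon exhaustion, agents receiving it switch instantly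 to their next non-exhausted good). $a^\sigma_{ij}$ is the total amount of good $j$ agent $i$ receives under bid profile $\sigma$. *)

From HB Require Import structures.
From mathcomp Require Import all_boot all_order all_algebra all_fingroup.
Set Implicit Arguments. Unset Strict Implicit. Unset Printing Implicit Defensive.
Import Order.TTheory GRing.Theory Num.Theory.
Local Open Scope ring_scope.

(* Goods are 'I_m, agents are 'I_n.  A preference list / bid is a
   permutation p : {perm 'I_m}; p l is the good ranked at position l
   (position 0 = most preferred). *)

Section SG.
Variables (R : realFieldType) (m n : nat).

Definition sg_current (sig : {perm 'I_m}) (rem : 'I_m -> R) : option 'I_m :=
  ohead [seq j <- [seq sig l | l <- enum 'I_m] | 0 < rem j].

Definition sg_state := (R * ('I_m -> R) * ('I_n -> 'I_m -> R))%type.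

(* One phase of the SG process: between two consecutive exhaustion events
   (or until time 1), every agent receives its current good at rate r i. *)
Definition sg_step (r : 'I_n -> R) (sig : 'I_n -> {perm 'I_m})
    (st : sg_state) : sg_state :=
  let: (t, rem, acc) := st in
  let rho j := \sum_(i < n | sg_current (sig i) rem == Some j) r i in
  let d := \big[Num.min/(1 - t)]_(j < m | 0 < rho j) (rem j / rho j) in
  (t + d, fun j => rem j - d * rho j,
   fun i j => acc i j + (if sg_current (sig i) rem == Some j then d * r i else 0)).

(* Each phase ends at time 1 or exhausts at least one good, so m.+1 phases
   run the process to completion (further phases change nothing). *)
Definition sg_alloc (q : 'I_m -> R) (r : 'I_n -> R) (sig : 'I_n -> {perm 'I_m})
    : 'I_n -> 'I_m -> R :=
  (iter m.+1 (sg_step r sig) (0, q, fun _ _ => 0)).2.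

Definition lex_prefers (p : {perm 'I_m}) (a b : 'I_m -> R) : Prop :=
  exists l : 'I_m, (forall k : 'I_m, (k < l)%N -> a (p k) = b (p k))
                   /\ b (p l) < a (p l).

Definition weakly_prefers (p : {perm 'I_m}) (a b : 'I_m -> R) : Prop :=
  (forall j, a j = b j) \/ lex_prefers p a b.

End SG.

(* If good j is exhausted at time phi j, an SG agent bidding b eats its k-th
   good b k exactly during [max_{k'<k} phi (b k'), max_{k'<=k} phi (b k')] at
   its rate, so SG shares are determined by the exhaustion times.  Let E and F
   be the exhaustion times under the truthful profile pi and under a coalition
   deviation sigma.  If F <= E, then for every k the first k goods on an
   agent's true list are gone no later under sigma, so by that time it has
   eaten no more of them: its share cannot become lexicographically larger.
   Otherwise let j be the delayed good (E j < F j) with least E j.  Then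
   E j < 1, so j is used up under pi; the coalition can absorb at most
   (sum_S r_i) E j < q_j of it, so some outsider eats j under pi.  Outsiders
   bid as before, reach j no later and eat it longer, so together they get
   strictly more of j under sigma, and some coalition member gets strictly
   less of j.  All goods that member ranks above j are exhausted no later
   than under pi, so it gains nothing before j: it is worse off. *)

From HB Require Import structures.
From mathcomp Require Import all_boot all_order all_algebra all_fingroup.
From mathcomp Require Import lra.
Import Order.TTheory GRing.Theory Num.Theory.
Local Open Scope ring_scope.
Set Implicit Arguments. Unset Strict Implicit. Unset Printing Implicit Defensive.

Lemma big_ord_ltS (T : Type) (idx : T) (op : SemiGroup.com_law T) m
    (F : 'I_m -> T) (l : 'I_m) :
  \big[op/idx]_(k < m | (k < l.+1)%N) F k
    = op (\big[op/idx]_(k < m | (k < l)%N) F k) (F l).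
Proof.
rewrite (bigD1 l) ?ltnSn //= SemiGroup.opC; congr (op _ _); apply: eq_bigl => k.
by rewrite ltnS ltn_neqAle andbC.
Qed.

Lemma bigmin_id_or_attained (R : realFieldType) (I : Type) (s : seq I)
    (P : pred I) (F : I -> R) (x0 : R) :
  \big[Num.min/x0]_(i <- s | P i) F i = x0 \/
  exists2 i, P i & \big[Num.min/x0]_(i <- s | P i) F i = F i.
Proof.
apply: (big_rec (fun x => x = x0 \/ exists2 i, P i & x = F i)); first by left.
by move=> i x Pi IH; case: (leP (F i) x) => _; [right; exists i | ].
Qed.

Lemma max_subr_le_clamp (R : realFieldType) (x y G : R) : y <= G ->
  Num.max x y - x <= Num.min (Num.max x y) G - Num.min x G.
Proof. by move=> yG; case: (leP x y); case: (leP y G); case: (leP x G) => //; lra. Qed.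

Section ReachTime.
Variables (R : realFieldType) (m : nat).
Implicit Types (phi : 'I_m -> R) (b : {perm 'I_m}).

(* The time at which an agent bidding [b] has finished its first [l] goods,
   when good [j] is exhausted at time [phi j]. *)
Definition reach_time phi b (l : nat) : R :=
  \big[Num.max/0]_(k < m | (k < l)%N) phi (b k).

Lemma reach_time0 phi b : reach_time phi b 0 = 0.
Proof. by rewrite /reach_time big_pred0. Qed.

Lemma reach_timeS phi b (k : 'I_m) :
  reach_time phi b k.+1 = Num.max (reach_time phi b k) (phi (b k)).
Proof. exact: big_ord_ltS. Qed.

Lemma reach_time_over phi b l : (m <= l)%N -> reach_time phi b l.+1 = reach_time phi b l.
Proof.
move=> ml; apply: eq_bigl => k.
by rewrite !(leq_trans (ltn_ord k)) // leqW.
Qed.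

Lemma reach_time_ge0 phi b l : 0 <= reach_time phi b l.
Proof. exact: bigmax_ge_id. Qed.

Lemma reach_time_homo phi b : {homo reach_time phi b : l l' / (l <= l')%N >-> l <= l'}.
Proof. by move=> l l' ll'; apply: sub_bigmax => k /leq_trans; apply. Qed.

Lemma reach_time_ge phi b (k : 'I_m) l : (k < l)%N -> phi (b k) <= reach_time phi b l.
Proof. exact: le_bigmax_cond. Qed.

Lemma reach_time_le phi b l T : 0 <= T ->
  (forall k : 'I_m, (k < l)%N -> phi (b k) <= T) -> reach_time phi b l <= T.
Proof. exact: bigmax_le. Qed.

Lemma le_reach_time phi phi' b l :
  (forall k : 'I_m, (k < l)%N -> phi (b k) <= phi' (b k)) ->
  reach_time phi b l <= reach_time phi' b l.
Proof.
move=> le_phi; apply: reach_time_le => [|k kl]; first exact: reach_time_ge0.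
exact: le_trans (le_phi k kl) (reach_time_ge _ _ kl).
Qed.

Lemma eq_reach_time phi phi' b l :
  (forall k : 'I_m, (k < l)%N -> phi (b k) = phi' (b k)) ->
  reach_time phi b l = reach_time phi' b l.
Proof. by move=> eq_phi; apply: eq_bigr => k /eq_phi. Qed.

Lemma reach_time_attained phi b T (k0 : 'I_m) l : 0 <= T ->
  (forall j, phi j <= T) -> phi (b k0) = T -> (k0 < l)%N -> reach_time phi b l = T.
Proof.
move=> T0 phiT phik0 k0l; apply/le_anti.
by rewrite reach_time_le //= -{1}phik0 reach_time_ge.
Qed.

End ReachTime.

Section GreedyShare.
Variables (R : realFieldType) (m : nat).
Implicit Types (a phi : 'I_m -> R) (b : {perm 'I_m}) (ri : R).

Definition greedy_share a ri phi b :=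
  forall k : 'I_m, a (b k) = ri * (reach_time phi b k.+1 - reach_time phi b k).

Lemma greedy_share_prefix_sum a ri phi b l : greedy_share a ri phi b ->
  \sum_(k < m | (k < l)%N) a (b k) = ri * reach_time phi b l.
Proof.
move=> share; elim: l => [|l IH]; first by rewrite reach_time0 mulr0 big_pred0.
have [lm|ml] := ltnP l m.
  by rewrite (big_ord_ltS _ _ _ (Ordinal lm)) /= IH share -mulrDr addrC subrK.
rewrite reach_time_over // -IH; apply: eq_bigl => k.
by rewrite !(leq_trans (ltn_ord k)) // leqW.
Qed.

Lemma greedy_shareE a ri phi b g : greedy_share a ri phi b ->
  a g = ri * (Num.max (reach_time phi b (b^-1 g)%g) (phi g)
              - reach_time phi b (b^-1 g)%g).
Proof. by move=> share; rewrite -{1}(permKV b g) share reach_timeS permKV. Qed.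

Lemma greedy_share_gt0 a ri phi b g : greedy_share a ri phi b ->
  0 < a g -> reach_time phi b (b^-1 g)%g < phi g.
Proof.
move=> share pos; rewrite ltNge; apply: contraTN pos => reached.
by rewrite (greedy_shareE g share) max_l // subrr mulr0 ltxx.
Qed.

Lemma greedy_share_ge0 a ri phi b g : greedy_share a ri phi b -> 0 <= ri -> 0 <= a g.
Proof.
move=> share ri0; rewrite -(permKV b g) share mulr_ge0 // subr_ge0.
exact: reach_time_homo.
Qed.

Lemma greedy_share_le a ri phi b g : greedy_share a ri phi b -> 0 <= ri ->
  0 <= phi g -> a g <= ri * phi g.
Proof.
move=> share ri0 phig0; rewrite (greedy_shareE g share) ler_wpM2l //.
have := reach_time_ge0 phi b (b^-1 g)%g.
by case: (leP (reach_time phi b (b^-1 g)%g) (phi g)); lra.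
Qed.

Lemma greedy_share_sum_le a ri phi b (A : pred 'I_m) G :
  greedy_share a ri phi b -> 0 <= ri -> 0 <= G -> (forall g, A g -> phi g <= G) ->
  \sum_(g | A g) a g <= ri * G.
Proof.
move=> share ri0 G0 AG.
pose f l := Num.min (reach_time phi b l) G.
have f_homo (k : nat) : f k <= f k.+1 by apply: le_min2 => //; exact: reach_time_homo.
have incr (k : 'I_m) : A (b k) -> a (b k) <= ri * (f k.+1 - f k).
  move=> Abk; rewrite share ler_wpM2l // /f reach_timeS.
  exact: max_subr_le_clamp (AG _ Abk).
rewrite (reindex_inj (@perm_inj _ b)) /=; apply: le_trans (ler_sum _ incr) _.
apply: (@le_trans _ _ (\sum_(k < m) ri * (f k.+1 - f k))).
  rewrite [X in _ <= X](bigID (fun k => A (b k))) /= lerDl.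
  by apply: sumr_ge0 => k _; rewrite mulr_ge0 // subr_ge0.
rewrite -mulr_sumr ler_wpM2l // -(big_mkord xpredT (fun k => f k.+1 - f k)).
by rewrite telescope_sumr // /f reach_time0 (min_l G0) subr0 ge_min lexx orbT.
Qed.

Lemma greedy_share_le_of_earlier aS aP ri F E bS p (k : 'I_m) :
  0 < ri -> greedy_share aS ri F bS -> greedy_share aP ri E p ->
  (forall j, 0 <= E j) ->
  (forall k' : 'I_m, (k' <= k)%N -> F (p k') <= E (p k')) ->
  (forall k' : 'I_m, (k' < k)%N -> aS (p k') = aP (p k')) ->
  aS (p k) <= aP (p k).
Proof.
move=> ri0 shS shP E0 FE same_prefix.
have : \sum_(g | ((p^-1)%g g < k.+1)%N) aS g <= ri * reach_time E p k.+1.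
  apply: greedy_share_sum_le shS (ltW ri0) (reach_time_ge0 _ _ _) _ => g kg.
  by rewrite -(permKV p g); apply: le_trans (FE _ kg) (reach_time_ge _ _ _).
rewrite (reindex_inj (@perm_inj _ p)) /=.
under eq_bigl do rewrite permK.
rewrite -(greedy_share_prefix_sum _ shP) !big_ord_ltS.
under eq_bigr => k' k'k do rewrite same_prefix //.
by rewrite lerD2l.
Qed.

Lemma eq_greedy_share a a' ri phi phi' b :
  (forall j, a' j = a j) -> (forall j, phi' j = phi j) ->
  greedy_share a ri phi b -> greedy_share a' ri phi' b.
Proof.
move=> eq_a eq_phi share k.
by rewrite eq_a share !(@eq_reach_time _ _ phi' phi) // => k' _; rewrite eq_phi.
Qed.

Lemma greedy_share_extend a ri phi phi' b (t d : R) (k0 : 'I_m) :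
  greedy_share a ri phi b -> 0 <= t -> 0 <= d ->
  (forall j, phi j <= t) -> (forall j, phi' j <= t + d) ->
  phi (b k0) = t -> phi' (b k0) = t + d ->
  (forall k : 'I_m, (k < k0)%N -> phi' (b k) = phi (b k)) ->
  greedy_share (fun j => a j + (if b k0 == j then d * ri else 0)) ri phi' b.
Proof.
move=> share t0 d0 phi_le phi'_le phik0 phi'k0 same_before k /=.
have early l : (l <= k0)%N -> reach_time phi' b l = reach_time phi b l.
  by move=> lk0; apply: eq_reach_time => k' k'l; apply: same_before (leq_trans k'l lk0).
have late l : (k0 < l)%N -> reach_time phi b l = t.
  exact: reach_time_attained.
have late' l : (k0 < l)%N -> reach_time phi' b l = t + d.
  by apply: reach_time_attained; rewrite ?addr_ge0.
rewrite share (inj_eq perm_inj) -val_eqE /=; case: (ltngtP k k0) => [kk0|k0k|/val_inj ->].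
- by rewrite addr0 !early // ltnW.
- have k0Sk : (k0 < k.+1)%N by rewrite ltnS ltnW.
  by rewrite addr0 (late' _ k0k) (late' _ k0Sk) (late _ k0k) (late _ k0Sk) !subrr.
- rewrite (late _ (ltnSn _)) (late' _ (ltnSn _)) early //.
  by rewrite mulrBr mulrDr; lra.
Qed.

End GreedyShare.

Section Current.
Variables (R : realFieldType) (m : nat).
Implicit Types (sig : {perm 'I_m}) (rem : 'I_m -> R).

Lemma ohead_filter_find (T : eqType) (a : pred T) (s : seq T) x :
  ohead (filter a s) = Some x -> has a s /\ x = nth x s (find a s).
Proof.
elim: s => //= y s IH; case: ifP => ay /=; first by case=> ->.
by move/IH.
Qed.

Lemma sg_current_None sig rem : sg_current sig rem = None -> forall j, rem j <= 0.
Proof.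
rewrite /sg_current => cur_none j; rewrite leNgt; apply/negP => remj.
suff : has (fun j => 0 < rem j) [seq sig l | l <- enum 'I_m].
  by rewrite has_filter; case: (filter _ _) cur_none.
apply/hasP; exists j => //; apply/mapP; exists (sig^-1 j)%g; rewrite ?mem_enum //.
by rewrite permKV.
Qed.

Lemma sg_current_Some sig rem g : sg_current sig rem = Some g ->
  exists k0 : 'I_m, [/\ g = sig k0, 0 < rem (sig k0) &
                        forall k : 'I_m, (k < k0)%N -> rem (sig k) <= 0].
Proof.
rewrite /sg_current => /ohead_filter_find [has_live ->].
set s := [seq sig l | l <- enum 'I_m] in has_live *.
have nth_s (k : 'I_m) : nth g s k = sig k.
  by rewrite (nth_map k) ?size_enum_ord // nth_ord_enum.
have k0m : (find (fun j => (0 < rem j)%R) s < m)%N.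
  by move: has_live; rewrite has_find size_map size_enum_ord.
exists (Ordinal k0m); rewrite -nth_s; split => //.
  exact: (nth_find g has_live).
by move=> k kk0; rewrite -nth_s leNgt (before_find _ kk0).
Qed.

Lemma sg_current_gt0 sig rem g : sg_current sig rem = Some g -> 0 < rem g.
Proof. by case/sg_current_Some => k0 [-> ? _]. Qed.

End Current.

Section Phase.
Variables (R : realFieldType) (m n : nat) (r : 'I_n -> R).
Variable sig : 'I_n -> {perm 'I_m}.
Hypothesis r_gt0 : forall i, 0 < r i.

Definition sg_rate (rem : 'I_m -> R) (j : 'I_m) : R :=
  \sum_(i < n | sg_current (sig i) rem == Some j) r i.

Definition sg_phase (t : R) (rem : 'I_m -> R) : R :=
  \big[Num.min/(1 - t)]_(j < m | 0 < sg_rate rem j) (rem j / sg_rate rem j).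

Lemma sg_stepE t rem (acc : 'I_n -> 'I_m -> R) :
  sg_step r sig (t, rem, acc) =
  (t + sg_phase t rem, fun j => rem j - sg_phase t rem * sg_rate rem j,
   fun i j => acc i j +
     (if sg_current (sig i) rem == Some j then sg_phase t rem * r i else 0)).
Proof. by []. Qed.

Variables (t : R) (rem : 'I_m -> R).
Hypotheses (t_le1 : t <= 1) (rem_ge0 : forall j, 0 <= rem j).

Lemma sg_rate_ge0 j : 0 <= sg_rate rem j.
Proof. by apply: sumr_ge0 => i _; exact: ltW. Qed.

Lemma sg_rate_gt0 j : 0 < sg_rate rem j -> 0 < rem j.
Proof.
apply: contraTT; rewrite -leNgt => remj; rewrite -leNgt /sg_rate big_pred0 // => i.
by apply/negP => /eqP /sg_current_gt0; rewrite ltNge remj.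
Qed.

Lemma sg_phase_ge0 : 0 <= sg_phase t rem.
Proof.
apply: le_bigmin => [|j _]; first by rewrite subr_ge0.
by rewrite divr_ge0 ?rem_ge0 ?sg_rate_ge0.
Qed.

Lemma sg_phase_le : sg_phase t rem <= 1 - t.
Proof. exact: bigmin_le_id. Qed.

Lemma sg_phase_rate_le j : sg_phase t rem * sg_rate rem j <= rem j.
Proof.
have [ratej|] := ltP 0 (sg_rate rem j).
  by rewrite -ler_pdivlMr //; apply: bigmin_le_cond.
move=> rate_le0; have -> : sg_rate rem j = 0 by apply/le_anti; rewrite rate_le0 sg_rate_ge0.
by rewrite mulr0.
Qed.

Lemma sg_phase_cases : sg_phase t rem = 1 - t \/
  exists2 j, 0 < sg_rate rem j & sg_phase t rem * sg_rate rem j = rem j.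
Proof.
case: (bigmin_id_or_attained (index_enum 'I_m) (fun j => 0 < sg_rate rem j)
   (fun j => rem j / sg_rate rem j) (1 - t)) => [|[j ratej dj]]; first by left.
by right; exists j; rewrite // /sg_phase dj divfK // gt_eqF.
Qed.

End Phase.

Section Process.
Variables (R : realFieldType) (m n : nat) (q : 'I_m -> R) (r : 'I_n -> R).
Variable sig : 'I_n -> {perm 'I_m}.
Hypotheses (q_gt0 : forall j, 0 < q j) (r_gt0 : forall i, 0 < r i).

(* [phi j] is the time good [j] was exhausted, or the current time if it is not. *)
Definition sg_invariant (st : sg_state R m n) : Prop :=
  let: (t, rem, acc) := st in
  [/\ 0 <= t <= 1, forall j, 0 <= rem j, forall j, rem j = q j - \sum_i acc i j &
   exists phi : 'I_m -> R,
     [/\ forall j, 0 <= phi j <= t, forall j, 0 < rem j -> phi j = t &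
         forall i, greedy_share (acc i) (r i) phi (sig i)]].

Definition sg_progress (k : nat) (st : sg_state R m n) : Prop :=
  let: (t, rem, _) := st in t = 1 \/ (k <= #|[set j | (rem j == 0)%R]|)%N.

Lemma sg_step_invariant st : sg_invariant st -> sg_invariant (sg_step r sig st).
Proof.
case: st => [[t rem] acc] [/andP[t0 t1] rem0 remE [phi [phi_bd phi_live share]]].
rewrite sg_stepE; set d := sg_phase r sig t rem; set rate := sg_rate r sig rem.
have d0 : 0 <= d by apply: sg_phase_ge0.
have d1 : d <= 1 - t by apply: sg_phase_le.
have rate0 j : 0 <= rate j by apply: sg_rate_ge0.
have drate j : d * rate j <= rem j by apply: sg_phase_rate_le.
split => [||j|].
- by rewrite addr_ge0 //= -lerBrDl.
- by move=> j; rewrite subr_ge0.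
- by rewrite big_split /= remE -big_mkcond -mulr_sumr opprD addrA.
pose phi' j := if 0 < rem j then t + d else phi j.
have phi_le j : phi j <= t by case/andP: (phi_bd j).
have phi'_le j : phi' j <= t + d.
  by rewrite /phi'; case: ifP => _; have := phi_le j; lra.
exists phi'; split => [j|j|i].
- by rewrite /phi'; case: ifP => _; [lra | case/andP: (phi_bd j) => *; lra].
- by move=> live; rewrite /phi' ifT //; have := mulr_ge0 d0 (rate0 j); lra.
case cur: (sg_current (sig i) rem) => [g|].
  have [k0 [-> livek0 dead_before]] := sg_current_Some cur.
  apply: eq_greedy_share (greedy_share_extend (share i) t0 d0 phi_le phi'_le _ _ _)
    => [j||||k kk0] //; last by rewrite /phi' ltNge dead_before.
  - exact: phi_live.
  - by rewrite /phi' livek0.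
apply: eq_greedy_share (share i) => [j|j] /=; first by rewrite addr0.
by rewrite /phi' ltNge (sg_current_None cur).
Qed.

Lemma sg_step_progress k st : sg_invariant st -> sg_progress k st ->
  sg_progress k.+1 (sg_step r sig st).
Proof.
case: st => [[t rem] acc] [/andP[_ t1] rem0 _ _]; rewrite sg_stepE /=.
have d0 : 0 <= sg_phase r sig t rem by apply: sg_phase_ge0.
have d1 : sg_phase r sig t rem <= 1 - t by apply: sg_phase_le.
case=> [t_eq1|k_dead]; first by left; lra.
have [d_eq|[j0 ratej0 dj0]] := sg_phase_cases r sig t rem; first by left; lra.
right; apply: leq_trans (_ : #|j0 |: [set j | (rem j == 0)%R]| <= _)%N.
  by rewrite cardsU1 inE gt_eqF ?(sg_rate_gt0 ratej0).
apply: subset_leq_card; apply/subsetP => j; rewrite !inE => /predU1P [-> | /eqP remj].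
  by rewrite dj0 subrr.
have rate0 : sg_rate r sig rem j = 0.
  apply/le_anti; rewrite sg_rate_ge0 // andbT leNgt.
  by apply/negP => /sg_rate_gt0; rewrite remj ltxx.
by rewrite remj rate0 mulr0 subrr.
Qed.

Lemma sg_iter_invariant k :
  sg_invariant (iter k (sg_step r sig) (0, q, fun _ _ => 0)) /\
  sg_progress k (iter k (sg_step r sig) (0, q, fun _ _ => 0)).
Proof.
elim: k => [|k [inv prog]]; last first.
  by split; [apply: sg_step_invariant | apply: sg_step_progress].
split; last by right.
split=> [||j|]; rewrite ?lexx ?ler01 //.
- by move=> j; apply: ltW.
- by rewrite big1 ?subr0.
exists (fun _ => 0); split => [j|//|i k]; first by rewrite lexx.
by rewrite /reach_time !bigmax_eq_id ?subrr ?mulr0.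
Qed.

Lemma sg_alloc_schedule : exists phi : 'I_m -> R,
  [/\ forall j, 0 <= phi j <= 1,
      forall i, greedy_share (sg_alloc q r sig i) (r i) phi (sig i),
      forall j, \sum_i sg_alloc q r sig i j <= q j &
      forall j, phi j < 1 -> \sum_i sg_alloc q r sig i j = q j].
Proof.
have [] := sg_iter_invariant m.+1; rewrite /sg_alloc.
case: (iter m.+1 _ _) => [[t rem] acc] /= [_ rem0 remE [phi [phi_bd phi_live share]]].
case=> [t1|]; last by rewrite leqNgt (leq_ltn_trans (max_card _)) // card_ord.
subst t; exists phi; split => // j.
  by have := remE j; have := rem0 j; lra.
move=> phij; have rem_eq0 : rem j = 0.
  apply/le_anti; rewrite rem0 andbT leNgt; apply/negP => /phi_live.
  by move: phij => /[swap] ->; rewrite ltxx.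
by have := remE j; lra.
Qed.

End Process.

Section Manipulation.
Variables (R : realFieldType) (m n : nat) (q : 'I_m -> R) (r : 'I_n -> R).
Variables (pi sigma : 'I_n -> {perm 'I_m}) (S : {set 'I_n}).
Variables (aP aS : 'I_n -> 'I_m -> R) (E F : 'I_m -> R).
Hypotheses (q_gt0 : forall j, 0 < q j) (r_gt0 : forall i, 0 < r i)
  (coalition_small : forall j, \sum_(i in S) r i <= q j)
  (sigma_out : forall i, i \notin S -> sigma i = pi i).
Hypotheses (E_ge0 : forall j, 0 <= E j) (F_le1 : forall j, F j <= 1)
  (aP_share : forall i, greedy_share (aP i) (r i) E (pi i))
  (aS_share : forall i, greedy_share (aS i) (r i) F (sigma i))
  (aS_col : forall j, \sum_i aS i j <= q j)
  (aP_col : forall j, E j < 1 -> \sum_i aP i j = q j).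

Lemma no_delay_no_gain i : (forall j, F j <= E j) -> ~ lex_prefers (pi i) (aS i) (aP i).
Proof.
move=> FE [l [same_prefix gain]].
have := greedy_share_le_of_earlier (r_gt0 i) (aS_share i) (aP_share i) E_ge0
  (fun k _ => FE _) same_prefix.
by rewrite leNgt gain.
Qed.

Variable js : 'I_m.
Hypotheses (js_delayed : E js < F js)
  (js_earliest : forall j, E j < F j -> E js <= E j).

Lemma earlier_not_delayed j : E j < E js -> F j <= E j.
Proof. by move=> Ej; rewrite leNgt; apply: contraTN Ej => /js_earliest; rewrite -leNgt. Qed.

Lemma delayed_unfinished : E js < 1.
Proof. exact: lt_le_trans js_delayed (F_le1 js). Qed.

Lemma outsider_share_delayed i : i \notin S ->
  aP i js <= aS i js /\ (0 < aP i js -> aP i js < aS i js).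
Proof.
move=> iS; have aS0 := greedy_share_ge0 js (aS_share i) (ltW (r_gt0 i)).
set k := ((pi i)^-1 js)%g.
have [reached|unreached] := ltP (reach_time E (pi i) k) (E js); last first.
  by rewrite (greedy_shareE js (aP_share i)) max_l // subrr mulr0 ltxx.
have FE : reach_time F (pi i) k <= reach_time E (pi i) k.
  apply: le_reach_time => k' k'k; apply: earlier_not_delayed.
  exact: le_lt_trans (reach_time_ge _ _ k'k) reached.
suff gain : aP i js < aS i js by split => [|_]; first exact: ltW.
rewrite (greedy_shareE js (aP_share i)) (greedy_shareE js (aS_share i)) sigma_out //.
rewrite -/k (max_r (ltW reached)) ltr_pM2l //.
have Fmax : F js <= Num.max (reach_time F (pi i) k) (F js) by rewrite le_max lexx orbT.
by apply: lt_le_trans (lerB Fmax FE); rewrite ltrD2r.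
Qed.

Lemma outsider_eats_delayed : exists2 i, i \notin S & 0 < aP i js.
Proof.
case: (pickP (fun i => (i \notin S) && (0 < aP i js))) => [i /andP[]|none].
  by exists i.
have insiders : \sum_(i in S) aP i js <= (\sum_(i in S) r i) * E js.
  rewrite mulr_suml; apply: ler_sum => i _.
  by apply: (greedy_share_le (aP_share i)); [apply: ltW | apply: E_ge0].
have outsiders : \sum_(i | i \notin S) aP i js = 0.
  apply: big1 => i iS; apply/eqP.
  rewrite eq_le (greedy_share_ge0 js (aP_share i) (ltW (r_gt0 i))) andbT leNgt.
  by move: (none i); rewrite /= iS /= => ->.
have qE_lt_q : q js * E js < q js.
  by rewrite -[X in _ < X]mulr1 ltr_pM2l ?delayed_unfinished.
have := le_lt_trans (le_trans insiders (ler_wpM2r (E_ge0 js) (coalition_small js))) qE_lt_q.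
by rewrite -(aP_col delayed_unfinished) [X in _ < X](bigID (fun i => i \in S)) /= outsiders addr0 ltxx.
Qed.

Lemma coalition_loses_delayed : exists2 i, i \in S & aS i js < aP i js.
Proof.
have [i1 i1S i1_eats] := outsider_eats_delayed.
have outsiders : \sum_(i | i \notin S) aP i js < \sum_(i | i \notin S) aS i js.
  rewrite (bigD1 i1 i1S) [X in _ < X](bigD1 i1 i1S) /=.
  apply: ltr_leD; first exact: (outsider_share_delayed i1S).2.
  by apply: ler_sum => i /andP[iS _]; apply: (outsider_share_delayed iS).1.
have insiders : \sum_(i in S) aS i js < \sum_(i in S) aP i js.
  have colS := aS_col js; rewrite (bigID (fun i => i \in S)) /= in colS.
  have colP := aP_col delayed_unfinished; rewrite (bigID (fun i => i \in S)) /= in colP.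
  rewrite -(ltrD2r (\sum_(i | i \notin S) aS i js)); apply: le_lt_trans colS _.
  by rewrite -colP ltrD2l.
case: (pickP (fun i => (i \in S) && (aS i js < aP i js))) => [i /andP[]|none].
  by exists i.
move: insiders; rewrite ltNge => /negP[]; apply: ler_sum => i iS.
by rewrite leNgt; move: (none i); rewrite /= iS /= => ->.
Qed.

Lemma loss_not_weakly_preferred i : aS i js < aP i js ->
  ~ weakly_prefers (pi i) (aS i) (aP i).
Proof.
move=> loss [same|[l [same_prefix gain]]]; first by move: loss; rewrite same ltxx.
set k := ((pi i)^-1 js)%g; have pik : pi i k = js by rewrite permKV.
case: (ltngtP l k) => [lk|kl|/val_inj lk].
- have aS0 := greedy_share_ge0 js (aS_share i) (ltW (r_gt0 i)).
  have reached := greedy_share_gt0 (aP_share i) (le_lt_trans aS0 loss).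
  have FE (k' : 'I_m) : (k' <= l)%N -> F (pi i k') <= E (pi i k').
    move=> k'l; apply: earlier_not_delayed; apply: le_lt_trans reached.
    exact: reach_time_ge (leq_ltn_trans k'l lk).
  have := greedy_share_le_of_earlier (r_gt0 i) (aS_share i) (aP_share i) E_ge0 FE same_prefix.
  by rewrite leNgt gain.
- by move: loss; rewrite -pik same_prefix // ltxx.
- by move: gain; rewrite lk pik => /(lt_trans loss); rewrite ltxx.
Qed.

End Manipulation.

Theorem theorem3 (R : realFieldType) (m n : nat)
    (q : 'I_m -> R) (r : 'I_n -> R)
    (hq : forall j, 0 < q j) (hr : forall i, 0 < r i)
    (hsum : \sum_(j < m) q j = \sum_(i < n) r i)
    (pi : 'I_n -> {perm 'I_m}) (S : {set 'I_n})
    (hS : forall j : 'I_m, \sum_(i in S) r i <= q j) :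
  ~ exists sigma : 'I_n -> {perm 'I_m},
      [/\ (forall i, i \notin S -> sigma i = pi i),
          (forall i, i \in S ->
             weakly_prefers (pi i) (sg_alloc q r sigma i) (sg_alloc q r pi i))
        & (exists2 i, i \in S &
             lex_prefers (pi i) (sg_alloc q r sigma i) (sg_alloc q r pi i))].
Proof.
case=> sigma [sigma_out weak [i0 i0S gain]].
have [E [E_bd aP_share _ aP_col]] := sg_alloc_schedule pi hq hr.
have [F [F_bd aS_share aS_col _]] := sg_alloc_schedule sigma hq hr.
have E_ge0 j : 0 <= E j by case/andP: (E_bd j).
have F_le1 j : F j <= 1 by case/andP: (F_bd j).
have [/existsP[j1 delayed1]|/existsPn no_delay] := boolP [exists j, E j < F j].
  case: (@arg_minP _ _ _ j1 (fun j => E j < F j) E delayed1) => js delayed earliest.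
  have [i iS loss] := coalition_loses_delayed hq hr hS sigma_out E_ge0 F_le1
    aP_share aS_share aS_col aP_col delayed earliest.
  exact: (loss_not_weakly_preferred hr E_ge0 aP_share aS_share earliest loss (weak i iS)).
apply: (no_delay_no_gain hr E_ge0 aP_share aS_share _ gain) => j.
by rewrite leNgt no_delay.
Qed.
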